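(* Assume the setting described in the context and that the joint distribution of $(X,\mathcal X_n)$ is absolutely continuous with respect to Lebesgue measure on $\mathbb R^{n+1}$. Consider the conditions: (i) $\Lambda$ (respectively $\Lambda_g$) is compact in $\mathbb R^n$; (ii) the copula diagonal $C_{X,\widehat X_\lambda}(x,x)$ of $(X,\widehat X_\lambda)$ is continuous in $\lambda$ on $\Lambda$ (respectively $\Lambda_g$), uniformly with respect to $x\in[0,1]$; (iii) for each $\lambda\in\Lambda$, $\widehat X_\lambda$ has an absolutely continuous distribution with density $p_{\widehat X_\lambda}$, and the map $\lambda\mapsto p_{\widehat X_\lambda}$ from $\Lambda$ to $L^1(\mathbb R)$ is continuous with respect to the $L^1$-norm. If (i) and (ii) hold (for $\Lambda_g$), then problem (P1) has a solution. If (i)–(iii) hold (for $\Lambda$), then problems (P2) and (P3) have solutions.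
   Context: Let $X$ be a real random variable whose c.d.f. $F_X$ is continuous and strictly increasing on the support of $X$, and let $\mathcal X_n=(X_1,\dots,X_n)$ be a random vector on the same probability space. Let $\Lambda\subseteq\mathbb R^n$ and let $g:\Lambda\times\mathbb R^n\to\mathbb R$ be continuous (hence measurable); set $\widehat X_\lambda:=g(\lambda,\mathcal X_n)$, $\lambda\in\Lambda$, and $\Lambda_g:=\{\lambda\in\Lambda: F_X(\widehat X_\lambda)\text{ is uniformly distributed on }(0,1)\}$. Fix $\gamma>0$ and put $Y_1^\lambda:=F_X(\widehat X_\lambda)$ with c.d.f. $F_{Y_1^\lambda}$. The problems are: (P1) minimize $\mathbf E F_X(X\vee\widehat X_\lambda)$ over $\lambda\in\Lambda_g$; (P2) minimize $2\,\mathbf E F_X(X\vee\widehat X_\lambda)-\mathbf E F_X(\widehat X_\lambda)$ over $\lambda\in\Lambda$; (P3) minimize $2\,\mathbf E F_X(X\vee\widehat X_\lambda)-\mathbf E F_X(\widehat X_\lambda)+\gamma\int_0^1F_{Y_1^\lambda}(y)\big[F_{Y_1^\lambda}(y)-2y\big]dy$ over $\lambda\in\Lambda$. Here $a\vee b=\max\{a,b\}$. *)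

From HB Require Import structures.
From mathcomp Require Import all_boot all_order all_algebra.
From mathcomp Require Import all_classical all_reals all_analysis.
Set Implicit Arguments. Unset Strict Implicit. Unset Printing Implicit Defensive.
Import Order.TTheory GRing.Theory Num.Theory.
Import numFieldNormedType.Exports.
Local Open Scope classical_set_scope.
Local Open Scope ring_scope.

Section Defs.
Context {d : measure_display} {T : measurableType d} {R : realType}
  (P : probability T R).

Definition FX (X : {RV P >-> R}) (x : R) : R := fine (cdf X x).

Definition cdfR (Y : T -> R) (y : R) : R := fine (P [set t | Y t <= y]).

Definition support_of (Y : T -> R) : set R :=
  [set x | forall e : R, 0 < e -> (0 < P [set t | (`|Y t - x| < e)%R])%E].

Definition vecX n (Xs : 'I_n -> {RV P >-> R}) (t : T) : 'rV[R]_n :=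
  \row_i Xs i t.

Definition jointX (X : {RV P >-> R}) n (Xs : 'I_n -> {RV P >-> R})
    (t : T) : 'rV[R]_(1 + n) :=
  row_mx (\row_(i < 1) X t) (vecX Xs t).

Definition Xhat n (g : 'rV[R]_n -> 'rV[R]_n -> R) (Xs : 'I_n -> {RV P >-> R})
    (l : 'rV[R]_n) (t : T) : R := g l (vecX Xs t).

Definition uniform01 (Y : T -> R) : Prop :=
  forall A : set R, measurable A ->
    P (Y @^-1` A) = lebesgue_measure (A `&` `]0%R, 1%R[).

Definition Lambda_g (X : {RV P >-> R}) n (Xs : 'I_n -> {RV P >-> R})
    (Lam : set 'rV[R]_n) (g : 'rV[R]_n -> 'rV[R]_n -> R) : set 'rV[R]_n :=
  [set l | Lam l /\ uniform01 (fun t => FX X (Xhat g Xs l t))].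

(* diagonal C_{X,Y}(x,x) of the copula of (X,Y), i.e. the joint c.d.f. of
   (F_X(X), F_Y(Y)) at (x,x) *)
Definition copula_diag (X : {RV P >-> R}) (Y : T -> R) (x : R) : R :=
  fine (P [set t | FX X (X t) <= x /\ cdfR Y (Y t) <= x]).

Definition diag_unif_cont (X : {RV P >-> R}) n (Xs : 'I_n -> {RV P >-> R})
    (g : 'rV[R]_n -> 'rV[R]_n -> R) (S : set 'rV[R]_n) : Prop :=
  forall l0, S l0 -> forall e : R, 0 < e ->
    exists2 delta : R, 0 < delta &
      forall l, S l -> `|l - l0| < delta ->
        forall x : R, 0 <= x <= 1 ->
          `|copula_diag X (Xhat g Xs l) x - copula_diag X (Xhat g Xs l0) x| < e.

Definition is_density (Y : T -> R) (f : R -> R) : Prop :=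
  (forall y, 0 <= f y) /\ measurable_fun setT f /\
  forall A : set R, measurable A ->
    P (Y @^-1` A) = (\int[lebesgue_measure]_(y in A) (f y)%:E)%E.

Definition J1 (X : {RV P >-> R}) n (Xs : 'I_n -> {RV P >-> R})
    (g : 'rV[R]_n -> 'rV[R]_n -> R) (l : 'rV[R]_n) : \bar R :=
  'E_P[fun t => FX X (Num.max (X t) (Xhat g Xs l t))].

Definition J0 (X : {RV P >-> R}) n (Xs : 'I_n -> {RV P >-> R})
    (g : 'rV[R]_n -> 'rV[R]_n -> R) (l : 'rV[R]_n) : \bar R :=
  'E_P[fun t => FX X (Xhat g Xs l t)].

Definition J2 (X : {RV P >-> R}) n (Xs : 'I_n -> {RV P >-> R})
    (g : 'rV[R]_n -> 'rV[R]_n -> R) (l : 'rV[R]_n) : \bar R :=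
  (2%:E * J1 X Xs g l - J0 X Xs g l)%E.

Definition FY1 (X : {RV P >-> R}) n (Xs : 'I_n -> {RV P >-> R})
    (g : 'rV[R]_n -> 'rV[R]_n -> R) (l : 'rV[R]_n) : R -> R :=
  cdfR (fun t => FX X (Xhat g Xs l t)).

Definition J3 (gamma : R) (X : {RV P >-> R}) n (Xs : 'I_n -> {RV P >-> R})
    (g : 'rV[R]_n -> 'rV[R]_n -> R) (l : 'rV[R]_n) : \bar R :=
  (J2 X Xs g l + gamma%:E *
     \int[lebesgue_measure]_(y in `[0%R, 1%R])
        (FY1 X Xs g l y * (FY1 X Xs g l y - 2 * y))%:E)%E.

End Defs.

Definition box {R : realType} m (a b : 'rV[R]_m) : set 'rV[R]_m :=
  [set v | forall i, a 0 i < v 0 i < b 0 i].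

Definition box_vol {R : realType} m (a b : 'rV[R]_m) : R :=
  \prod_(i < m) Num.max (b 0 i - a 0 i) 0.

Definition leb_null {R : realType} m (A : set 'rV[R]_m) : Prop :=
  forall e : R, 0 < e -> exists a b : nat -> 'rV[R]_m,
    A `<=` \bigcup_k box (a k) (b k) /\
    (\sum_(0 <= k <oo) (box_vol (a k) (b k))%:E < e%:E)%E.

Definition abs_cont_law {d} {T : measurableType d} {R : realType}
    (P : probability T R) m (Z : T -> 'rV[R]_m) : Prop :=
  forall A, leb_null A ->
    exists E : set T, [/\ measurable E, Z @^-1` A `<=` E & P E = 0%E].

From HB Require Import structures.
From mathcomp Require Import all_boot all_order all_algebra.
From mathcomp Require Import all_classical all_reals all_analysis.
From mathcomp Require Import lra measurable_realfun.
Import Order.TTheory GRing.Theory Num.Theory.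
Import numFieldNormedType.Exports.
Local Open Scope classical_set_scope.
Local Open Scope ring_scope.

(* Each objective is, on the parameter set, a finite real number depending
   sequentially continuously on [l], so the extreme value theorem on the
   compact parameter set yields a minimiser.  The integrands of [J1] and [J0]
   are bounded by 1 and converge pointwise as [l_k --> l], by continuity of
   [g] and [F_X], hence bounded convergence applies.  For the extra term of
   (P3), [|F_{Y_1^l}(y) - F_{Y_1^m}(y)| <= ||p_l - p_m||_1], so the
   L^1-continuity of the densities makes the integrand on [[0,1]] converge
   pointwise, and bounded convergence applies again. *)

Lemma continuous_within_seq {R : realType} {V : normedModType R} {A : set V}
    {f : V -> R} :
  (forall x, A x -> forall u : nat -> V, (forall k, A (u k)) ->
     u k @[k --> \oo] --> x -> f (u k) @[k --> \oo] --> f x) ->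
  {within A, continuous f}.
Proof.
move=> fseq; rewrite continuous_subspace_in => x /set_mem Ax.
suff : f @ within A (nbhs x) --> f x by rewrite nbhs_subspace_in.
apply/cvgrPdist_lt => e e0.
apply: contrapT => nfar.
have far k : exists y, [/\ A y, `|x - y| < k.+1%:R^-1 & e <= `|f x - f y|].
  apply: contrapT => nfar_k; apply: nfar; apply/nbhs_ballP.
  exists k.+1%:R^-1; first by rewrite /= invr_gt0.
  move=> y /= bxy Ay; rewrite -ball_normE /= in bxy.
  by rewrite ltNge; apply/negP => ley; apply: nfar_k; exists y.
pose u k := projT1 (cid (far k)).
have uP k : [/\ A (u k), `|x - u k| < k.+1%:R^-1 & e <= `|f x - f (u k)|].
  exact: projT2 (cid (far k)).
have ux : u k @[k --> \oo] --> x.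
  apply/cvgrPdist_lt => eps eps0; near=> k.
  have [_ uk _] := uP k; apply: lt_trans uk _.
  by near: k; exact: (near_infty_natSinv_lt (PosNum eps0)).
have Au k : A (u k) by case: (uP k).
have /cvgrPdist_lt/(_ e e0)[N _ fN] := fseq x Ax u Au ux.
by have [_ _] := uP N; rewrite leNgt (fN N (leqnn N)).
Unshelve. all: by end_near.
Qed.

Lemma cvg_within_continuous {T : Type} {U V : topologicalType}
    (F : set_system T) {FF : Filter F} (A : set U) (f : U -> V)
    (h : T -> U) (x : U) :
  {within A, continuous f} -> A x -> (forall s, A (h s)) ->
  h s @[s --> F] --> x -> f (h s) @[s --> F] --> f x.
Proof.
rewrite continuous_subspace_in => fc Ax hA hx.
have : f @ within A (nbhs x) --> f x.
  by rewrite (nbhs_subspace_in Ax); exact: fc x (mem_set Ax).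
move/(cvg_trans _); apply => W /= AW.
exact: filterS (fun s (Ws : A (h s) -> W (f (h s))) => Ws (hA s)) (hx _ AW).
Qed.

Section JointlyContinuous.
Context {U V W : topologicalType} {A : set U} {f : U -> V -> W}.
Hypothesis fc : {within [set z : U * V | A z.1], continuous (fun z => f z.1 z.2)}.

Lemma continuous_within_section u : A u -> continuous (f u).
Proof.
move=> Au v.
apply: (@cvg_within_continuous _ _ _ _ _ _ _ (fun w => (u, w)) (u, v) fc) => //.
by apply: cvg_pair; [exact: cvg_cst|exact: cvg_id].
Qed.

Lemma cvg_within_param (s : nat -> U) u v : A u -> (forall k, A (s k)) ->
  s k @[k --> \oo] --> u -> f (s k) v @[k --> \oo] --> f u v.
Proof.
move=> Au As su.
apply: (@cvg_within_continuous _ _ _ _ _ _ _ (fun k => (s k, v)) (u, v) fc) => //.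
by apply: cvg_pair; [exact: su|exact: cvg_cst].
Qed.
End JointlyContinuous.

Lemma rV_norm_lt {R : realType} {n} (v : 'rV[R]_n) r : 0 < r ->
  (forall i, `|v 0 i| < r) -> `|v| < r.
Proof.
move=> r0 vr; rewrite [`|v|]mx_normrE; apply: bigmax_lt => // -[i j] _ /=.
by rewrite (ord1 i); exact: vr.
Qed.

Definition rat_box {R : realType} {n} (ab : {ffun 'I_n -> rat} * {ffun 'I_n -> rat}) :
  set 'rV[R]_n := [set v | forall i, ratr (ab.1 i) < v 0 i < ratr (ab.2 i)].

Lemma rat_box_ball {R : realType} {n} (v : 'rV[R]_n) r : 0 < r ->
  exists ab, rat_box ab v /\ rat_box ab `<=` ball v r.
Proof.
move=> r0.
have lo i : exists q : rat, ratr q \in `](v 0 i - r), (v 0 i)[.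
  by apply: rat_in_itvoo; rewrite ltrBlDr ltrDl.
have hi i : exists q : rat, ratr q \in `](v 0 i), (v 0 i + r)[.
  by apply: rat_in_itvoo; rewrite ltrDl.
pose a := [ffun i => projT1 (cid (lo i))].
pose b := [ffun i => projT1 (cid (hi i))].
have bounds i : v 0 i - r < ratr (a i) < v 0 i /\ v 0 i < ratr (b i) < v 0 i + r.
  have := projT2 (cid (lo i)); have := projT2 (cid (hi i)).
  by rewrite !ffunE !in_itv.
exists (a, b).
split=> [i|w wbox]; first by have [/andP[_ ->] /andP[-> _]] := bounds i.
rewrite -ball_normE /=; apply: rV_norm_lt => // i; rewrite !mxE.
have [/andP[l1 l2] /andP[h1 h2]] := bounds i; have /andP[w1 w2] := wbox i.
rewrite ltr_norml; apply/andP; split; lra.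
Qed.

Section MeasurableRow.
Context {R : realType} {d} {T : measurableType d} {n} {Z : 'I_n -> T -> R}.
Hypothesis mZ : forall i, measurable_fun setT (Z i).

Let row_of (t : T) : 'rV[R]_n := \row_i Z i t.

Lemma measurable_preimage_rat_box ab : measurable (row_of @^-1` rat_box ab).
Proof.
have -> : row_of @^-1` rat_box ab =
    \bigcap_(i in [set: 'I_n]) (Z i @^-1` `](ratr (ab.1 i)), (ratr (ab.2 i))[).
  apply/seteqP; split => t /= tbox i.
    by move=> _; move: (tbox i); rewrite /row_of mxE /= in_itv.
  by move: (tbox i I); rewrite /row_of mxE /= in_itv.
apply: fin_bigcap_measurable; first exact: finite_finset.
by move=> i _; rewrite -[X in measurable X]setTI; exact: mZ.
Qed.

(* Rational boxes form a countable base of the topology of ['rV_n]. *)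
Lemma measurable_preimage_open (U : set 'rV[R]_n) : open U ->
  measurable (row_of @^-1` U).
Proof.
move=> Uo.
pose piece ab : set T :=
  if pselect (rat_box ab `<=` U) then row_of @^-1` rat_box ab else set0.
have -> : row_of @^-1` U = \bigcup_ab piece ab.
  apply/seteqP; split => [t Ut|t [ab _]]; last first.
    by rewrite /piece; case: pselect => // sub /sub.
  have /nbhs_ballP[r r0 rU] := Uo _ Ut.
  have [ab [tab abr]] := rat_box_ball (row_of t) r r0.
  by exists ab => //; rewrite /piece; case: pselect => // -[]; exact: subset_trans rU.
apply: countable_bigcupT_measurable; first exact: countableP.
move=> ab; rewrite /piece; case: pselect => sub; last exact: measurable0.
exact: measurable_preimage_rat_box.
Qed.

Lemma measurable_fun_continuous_row (h : 'rV[R]_n -> R) : continuous h ->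
  measurable_fun setT (h \o row_of).
Proof.
move=> hc; apply: (measurability (@RGenOInfty.G R)).
  exact: RGenOInfty.measurableE.
move=> _ [_ [x ->] <-]; rewrite setTI comp_preimage.
apply: measurable_preimage_open; apply: open_comp => [v _|]; first exact: hc.
by apply: interval_open.
Qed.
End MeasurableRow.

Section BoundedConvergence.
Context {d} {U : measurableType d} {R : realType} {mu : {measure set U -> \bar R}}.
Context {D : set U} {c : R}.
Hypotheses (mD : measurable D) (muD : (mu D < +oo)%E).

Let integrable_cst : mu.-integrable D (EFin \o cst c).
Proof.
apply/integrableP; split; first exact/measurable_EFinP.
by rewrite /= integral_cst //= lte_mul_pinfty.
Qed.

Lemma integrable_bounded (f : U -> R) :
  measurable_fun D f -> (forall x, D x -> `|f x| <= c) ->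
  mu.-integrable D (EFin \o f).
Proof.
move=> mf fc; apply: le_integrable integrable_cst => //.
  exact/measurable_EFinP.
move=> x Dx /=; rewrite lee_fin (ger0_norm (le_trans _ (fc x Dx))) //.
exact: fc.
Qed.

Lemma fin_num_integral_bounded (f : U -> R) :
  measurable_fun D f -> (forall x, D x -> `|f x| <= c) ->
  (\int[mu]_(x in D) (f x)%:E)%E \is a fin_num.
Proof. by move=> mf fc; apply: integrable_fin_num => //; exact: integrable_bounded. Qed.

Lemma cvg_integral_bounded (f_ : nat -> U -> R) (f : U -> R) :
  (forall k, measurable_fun D (f_ k)) -> measurable_fun D f ->
  (forall k x, D x -> `|f_ k x| <= c) ->
  (forall x, D x -> f_ k x @[k --> \oo] --> f x) ->
  fine (\int[mu]_(x in D) (f_ k x)%:E)%E @[k --> \oo] -->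
  fine (\int[mu]_(x in D) (f x)%:E)%E.
Proof.
move=> mf_ mf f_c f_f.
have fc x : D x -> `|f x| <= c.
  move=> Dx; apply: (closed_cvg _ (@closed_le R c) _ _ (cvg_norm (f_f x Dx))).
  by apply: nearW => k; exact: f_c.
have f_fE x : D x -> (f_ k x)%:E @[k --> \oo] --> (f x)%:E.
  by move=> Dx; apply: cvg_EFin; [exact: nearW|exact: f_f].
have [_ _ cvgI] := dominated_convergence mD
  (fun k => proj2 (measurable_EFinP _ _) (mf_ k)) (proj2 (measurable_EFinP _ _) mf)
  (aeW _ f_fE) integrable_cst (aeW _ (fun x k Dx => f_c k x Dx)).
apply: fine_cvg; rewrite fineK //; exact: fin_num_integral_bounded.
Qed.
End BoundedConvergence.

Section DistributionFunction.
Context {d} {T : measurableType d} {R : realType} (P : probability T R).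
Context {Y : T -> R} (mY : measurable_fun setT Y).

Let measurable_le y : measurable [set t | Y t <= y].
Proof.
have -> : [set t | Y t <= y] = Y @^-1` `]-oo, y].
  by apply/seteqP; split => t; rewrite /= in_itv.
by rewrite -[X in measurable X]setTI; exact: mY.
Qed.

Lemma cdfRE y : (cdfR P Y y)%:E = P [set t | Y t <= y].
Proof. by rewrite fineK // fin_num_measure. Qed.

Lemma cdfR_ge0_le1 y : 0 <= cdfR P Y y <= 1.
Proof. by rewrite -!lee_fin cdfRE measure_ge0 probability_le1. Qed.

Lemma measurable_cdfR : measurable_fun setT (cdfR P Y).
Proof.
apply: nondecreasing_measurable => // y y' yy'; rewrite -lee_fin !cdfRE.
by apply: le_measure; rewrite ?inE // => t /= /le_trans; apply.
Qed.
End DistributionFunction.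

Section DensityBounds.
Context {d} {T : measurableType d} {R : realType} {P : probability T R}.

Lemma integrable_density {Y : T -> R} {p A} : is_density P Y p -> measurable A ->
  lebesgue_measure.-integrable A (EFin \o p).
Proof.
move=> [p0 [mp pY]] mA; apply/integrableP; split.
  by apply/measurable_EFinP; exact: measurable_funS mp.
under eq_integral do rewrite /= ger0_norm //.
apply: (@le_lt_trans _ _ (\int[lebesgue_measure]_y (p y)%:E)%E).
  apply: ge0_subset_integral => //; first exact/measurable_EFinP.
  by move=> y _; rewrite lee_fin.
by rewrite -pY // preimage_setT probability_setT ltry.
Qed.

Lemma abse_probability_sub_le {Y1 Y2 : T -> R} {p1 p2 A} :
  is_density P Y1 p1 -> is_density P Y2 p2 -> measurable A ->
  (`|P (Y1 @^-1` A) - P (Y2 @^-1` A)| <=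
   \int[lebesgue_measure]_y (`|p1 y - p2 y|)%:E)%E.
Proof.
move=> dY1 dY2 mA; have [_ [mp1 ->//]] := dY1; have [_ [mp2 ->//]] := dY2.
have mp12 : measurable_fun setT (fun y => p1 y - p2 y) by exact: measurable_funB.
have ip1 := integrable_density dY1 mA; have ip2 := integrable_density dY2 mA.
rewrite -integralB_EFin //.
apply: le_trans; first apply: le_abse_integral; first exact: mA.
  by apply/measurable_EFinP; exact: measurable_funS mp12.
apply: ge0_subset_integral => //.
by apply/measurable_EFinP; exact: measurableT_comp.
Qed.
End DensityBounds.

Lemma compact_argmin_fin (R : realType) n (A : set 'rV[R]_n) (F : 'rV[R]_n -> \bar R) :
  A !=set0 -> compact A -> (forall l, A l -> F l \is a fin_num) ->
  (forall l, A l -> forall u : nat -> 'rV[R]_n, (forall k, A (u k)) ->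
     u k @[k --> \oo] --> l -> fine (F (u k)) @[k --> \oo] --> fine (F l)) ->
  exists2 l, A l & forall m, A m -> (F l <= F m)%E.
Proof.
move=> A0 cA Ffin Fseq.
have [l /set_mem Al lmin] := EVT_min_rV A0 cA (continuous_within_seq Fseq).
exists l => // m Am; rewrite -(fineK (Ffin l Al)) -(fineK (Ffin m Am)) lee_fin.
exact: lmin (mem_set Am).
Qed.

Section Objectives.
Context {R : realType} {d} {T : measurableType d} {P : probability T R}.
Context {X : {RV P >-> R}} {n} {Xs : 'I_n -> {RV P >-> R}}.
Context {Lam : set 'rV[R]_n} {g : 'rV[R]_n -> 'rV[R]_n -> R}.
Hypothesis gc : {within [set z : 'rV[R]_n * 'rV[R]_n | Lam z.1],
  continuous (fun z => g z.1 z.2)}.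
Hypothesis FXc : continuous (FX X).

Lemma normr_FX_le1 x : `|FX X x| <= 1.
Proof.
rewrite /FX; have := cdf_ge0 X x; have := cdf_le1 X x.
by case: (cdf X x) => //= r; rewrite !lee_fin => r1 r0; rewrite ger0_norm.
Qed.

Let measurable_FX : measurable_fun setT (FX X).
Proof. exact: continuous_measurable_fun. Qed.

Lemma measurable_Xhat l : Lam l -> measurable_fun setT (Xhat g Xs l).
Proof.
move=> Ll; apply: (measurable_fun_continuous_row (Z := fun i => Xs i)).
  by move=> i; exact: measurable_funPT.
exact: continuous_within_section gc l Ll.
Qed.

Lemma cvg_Xhat (u : nat -> 'rV[R]_n) l t : Lam l -> (forall k, Lam (u k)) ->
  u k @[k --> \oo] --> l -> Xhat g Xs (u k) t @[k --> \oo] --> Xhat g Xs l t.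
Proof. exact: cvg_within_param gc u l (vecX Xs t). Qed.

Let P_setT_finite : (P setT < +oo)%E.
Proof. by rewrite probability_setT ltry. Qed.

Lemma expectation_FX_fin (Y : T -> R) : measurable_fun setT Y ->
  ('E_P[fun t => FX X (Y t)])%E \is a fin_num.
Proof.
move=> mY; rewrite unlock.
apply: (fin_num_integral_bounded measurableT P_setT_finite) => [|t _].
  exact: measurableT_comp.
exact: normr_FX_le1.
Qed.

Lemma cvg_expectation_FX (Y_ : nat -> T -> R) (Y : T -> R) :
  (forall k, measurable_fun setT (Y_ k)) -> measurable_fun setT Y ->
  (forall t, Y_ k t @[k --> \oo] --> Y t) ->
  fine ('E_P[fun t => FX X (Y_ k t)])%E @[k --> \oo] -->
  fine ('E_P[fun t => FX X (Y t)])%E.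
Proof.
move=> mY_ mY Y_Y; rewrite unlock.
apply: (cvg_integral_bounded measurableT P_setT_finite) => [k|||t _].
- exact: measurableT_comp.
- exact: measurableT_comp.
- by move=> k t _; exact: normr_FX_le1.
- exact: continuous_cvg _ (FXc _) (Y_Y t).
Qed.

Let Ymax l := (X : T -> R) \max Xhat g Xs l.

Let measurable_Ymax l : Lam l -> measurable_fun setT (Ymax l).
Proof.
by move=> Ll; exact: measurable_maxr (measurable_funPT X) (measurable_Xhat _ Ll).
Qed.

Lemma J1_fin l : Lam l -> J1 X Xs g l \is a fin_num.
Proof. by move=> Ll; exact: expectation_FX_fin (measurable_Ymax _ Ll). Qed.

Lemma J0_fin l : Lam l -> J0 X Xs g l \is a fin_num.
Proof. by move=> Ll; exact: expectation_FX_fin (measurable_Xhat _ Ll). Qed.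

Lemma J2_fin l : Lam l -> J2 X Xs g l \is a fin_num.
Proof.
by move=> Ll; rewrite /J2 fin_numB (J0_fin _ Ll) andbT fin_numM // (J1_fin _ Ll).
Qed.

Lemma fine_J2 l : Lam l ->
  fine (J2 X Xs g l) = 2 * fine (J1 X Xs g l) - fine (J0 X Xs g l).
Proof.
move=> Ll; rewrite /J2 -(fineK (J1_fin _ Ll)) -(fineK (J0_fin _ Ll)).
by rewrite -EFinM -EFinB.
Qed.

Section ConvergentParameters.
Variables (u : nat -> 'rV[R]_n) (l : 'rV[R]_n).
Hypotheses (Ll : Lam l) (Lu : forall k, Lam (u k)) (ul : u k @[k --> \oo] --> l).

Lemma cvg_J1 : fine (J1 X Xs g (u k)) @[k --> \oo] --> fine (J1 X Xs g l).
Proof.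
apply: cvg_expectation_FX (fun k => measurable_Ymax _ (Lu k))
  (measurable_Ymax _ Ll) _ => t.
have maxXt_cont : continuous (fun y => Num.max (X t) y).
  by apply: max_fun_continuous; [exact: cst_continuous|move=> y; exact: cvg_id].
exact: continuous_cvg _ (maxXt_cont _) (cvg_Xhat u l t Ll Lu ul).
Qed.

Lemma cvg_J0 : fine (J0 X Xs g (u k)) @[k --> \oo] --> fine (J0 X Xs g l).
Proof.
apply: cvg_expectation_FX (fun k => measurable_Xhat _ (Lu k))
  (measurable_Xhat _ Ll) _ => t.
exact: cvg_Xhat u l t Ll Lu ul.
Qed.

Lemma cvg_J2 : fine (J2 X Xs g (u k)) @[k --> \oo] --> fine (J2 X Xs g l).
Proof.
rewrite fine_J2 //; under eq_cvg do rewrite fine_J2 //.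
by apply: cvgB; [apply: cvgM; [exact: cvg_cst|exact: cvg_J1]|exact: cvg_J0].
Qed.
End ConvergentParameters.

Section DensityObjective.
Variable p : 'rV[R]_n -> R -> R.
Hypothesis Xhat_density : forall l, Lam l -> is_density P (Xhat g Xs l) (p l).
Hypothesis density_L1_continuous : forall l0, Lam l0 -> forall e : R, 0 < e ->
  exists2 delta : R, 0 < delta & forall l, Lam l -> `|l - l0| < delta ->
    (\int[lebesgue_measure]_y (`|p l y - p l0 y|)%:E < e%:E)%E.

Let measurable_FX_Xhat l : Lam l ->
  measurable_fun setT (fun t => FX X (Xhat g Xs l t)).
Proof. by move=> Ll; exact: measurableT_comp (measurable_Xhat _ Ll). Qed.

Let FY1E l y : Lam l ->
  (FY1 X Xs g l y)%:E = P (Xhat g Xs l @^-1` (FX X @^-1` `]-oo, y])).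
Proof.
move=> Ll; rewrite /FY1 cdfRE; last exact: measurable_FX_Xhat.
by congr (P _); apply/seteqP; split => t; rewrite /= in_itv.
Qed.

Lemma cvg_FY1 (u : nat -> 'rV[R]_n) l y : Lam l -> (forall k, Lam (u k)) ->
  u k @[k --> \oo] --> l -> FY1 X Xs g (u k) y @[k --> \oo] --> FY1 X Xs g l y.
Proof.
move=> Ll Lu ul; apply/cvgrPdist_lt => e e0.
have [delta delta0 close] := density_L1_continuous l Ll e e0.
move/cvgrPdist_lt: ul => /(_ delta delta0); apply: filterS => k lk.
have mA : measurable (FX X @^-1` `]-oo, y]).
  by rewrite -[X in measurable X]setTI; exact: measurable_FX.
rewrite distrC -lte_fin -abse_EFin EFinB !FY1E //.
have := abse_probability_sub_le (Xhat_density _ (Lu k)) (Xhat_density _ Ll) mA.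
by move/le_lt_trans; apply; apply: close; rewrite // distrC.
Qed.

Let penalty_integrand l y := FY1 X Xs g l y * (FY1 X Xs g l y - 2 * y).

Let measurable_penalty_integrand l : Lam l ->
  measurable_fun (`[0%R, 1%R] : set R) (penalty_integrand l).
Proof.
move=> Ll; apply: measurable_funS measurableT _ _ => //.
have mFY1 := measurable_cdfR P (measurable_FX_Xhat _ Ll).
by apply: measurable_funM => //; apply: measurable_funB => //; exact: measurable_funM.
Qed.

Let penalty_integrand_bound l y : Lam l -> `[0%R, 1%R]%classic y ->
  `|penalty_integrand l y| <= 2.
Proof.
move=> Ll; rewrite /= in_itv /= => /andP[y0 y1].
have /andP[F0 F1] := cdfR_ge0_le1 P (measurable_FX_Xhat _ Ll) y.
rewrite /penalty_integrand /FY1 ler_norml; apply/andP; split; nra.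
Qed.

Let unit_interval_finite :
  (lebesgue_measure (`[0%R, 1%R]%classic : set R) < +oo)%E.
Proof. by rewrite lebesgue_measure_itv /= lte01 oppr0 adde0 ltry. Qed.

Let penalty l :=
  (\int[lebesgue_measure]_(y in `[0%R, 1%R]) (penalty_integrand l y)%:E)%E.

Let penalty_fin l : Lam l -> penalty l \is a fin_num.
Proof.
move=> Ll; apply: fin_num_integral_bounded.
- exact: measurable_itv.
- exact: unit_interval_finite.
- exact: measurable_penalty_integrand.
- by move=> y; exact: penalty_integrand_bound.
Qed.

Let cvg_penalty (u : nat -> 'rV[R]_n) l : Lam l -> (forall k, Lam (u k)) ->
  u k @[k --> \oo] --> l -> fine (penalty (u k)) @[k --> \oo] --> fine (penalty l).
Proof.
move=> Ll Lu ul; apply: cvg_integral_bounded.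
- exact: measurable_itv.
- exact: unit_interval_finite.
- by move=> k; exact: measurable_penalty_integrand.
- exact: measurable_penalty_integrand.
- by move=> k y; exact: penalty_integrand_bound.
- move=> y _; have FY1y := cvg_FY1 u l y Ll Lu ul.
  by apply: cvgM => //; apply: cvgB => //; exact: cvg_cst.
Qed.

Variable gamma : R.

Lemma J3_fin l : Lam l -> J3 gamma X Xs g l \is a fin_num.
Proof. by move=> Ll; rewrite /J3 fin_numD J2_fin // fin_numM // penalty_fin. Qed.

Lemma cvg_J3 (u : nat -> 'rV[R]_n) l : Lam l -> (forall k, Lam (u k)) ->
  u k @[k --> \oo] --> l ->
  fine (J3 gamma X Xs g (u k)) @[k --> \oo] --> fine (J3 gamma X Xs g l).
Proof.
have fine_J3 m : Lam m ->
    fine (J3 gamma X Xs g m) = fine (J2 X Xs g m) + gamma * fine (penalty m).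
  move=> Lm; rewrite /J3 fineD ?fin_numM ?J2_fin ?penalty_fin //.
  by rewrite fineM ?penalty_fin.
move=> Ll Lu ul; rewrite fine_J3 //; under eq_cvg do rewrite fine_J3 //.
by apply: cvgD; [exact: cvg_J2|apply: cvgM; [exact: cvg_cst|exact: cvg_penalty]].
Qed.
End DensityObjective.

End Objectives.

Theorem mainTheorem10 (R : realType) (d : measure_display)
  (T : measurableType d) (P : probability T R)
  (X : {RV P >-> R}) (n : nat) (Xs : 'I_n -> {RV P >-> R})
  (Lam : set 'rV[R]_n) (g : 'rV[R]_n -> 'rV[R]_n -> R) (gamma : R) :
  {within [set z : 'rV[R]_n * 'rV[R]_n | Lam z.1],
     continuous (fun z : 'rV[R]_n * 'rV[R]_n => g z.1 z.2)} ->
  continuous (FX X) ->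
  (forall x y, support_of P X x -> support_of P X y -> x < y ->
     FX X x < FX X y) ->
  0 < gamma ->
  abs_cont_law P (jointX X Xs) ->
  ((Lambda_g X Xs Lam g !=set0 ->
    compact (Lambda_g X Xs Lam g) ->
    diag_unif_cont X Xs g (Lambda_g X Xs Lam g) ->
    exists2 l, Lambda_g X Xs Lam g l &
      forall m, Lambda_g X Xs Lam g m -> (J1 X Xs g l <= J1 X Xs g m)%E)
  /\
   (Lam !=set0 -> compact Lam -> diag_unif_cont X Xs g Lam ->
    forall p : 'rV[R]_n -> R -> R,
    (forall l, Lam l -> is_density P (Xhat g Xs l) (p l)) ->
    (forall l0, Lam l0 -> forall e : R, 0 < e ->
       exists2 delta : R, 0 < delta &
         forall l, Lam l -> `|l - l0| < delta ->
           (\int[lebesgue_measure]_y (`|p l y - p l0 y|)%:E < e%:E)%E) ->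
    (exists2 l, Lam l &
       forall m, Lam m -> (J2 X Xs g l <= J2 X Xs g m)%E) /\
    (exists2 l, Lam l &
       forall m, Lam m -> (J3 gamma X Xs g l <= J3 gamma X Xs g m)%E))).
Proof.
move=> gc FXc _ _ _; split.
  move=> S0 cS _; have SLam : Lambda_g X Xs Lam g `<=` Lam by move=> l [].
  apply: compact_argmin_fin S0 cS _ _ => [l Sl|l Sl u Su ul].
    exact: J1_fin gc FXc l (SLam _ Sl).
  exact: cvg_J1 gc FXc u l (SLam _ Sl) (fun k => SLam _ (Su k)) ul.
move=> L0 cL _ p dens L1; split; apply: compact_argmin_fin L0 cL _ _.
- by move=> l Ll; exact: J2_fin gc FXc l Ll.
- by move=> l Ll u Lu ul; exact: cvg_J2 gc FXc u l Ll Lu ul.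
- by move=> l Ll; exact: J3_fin gc FXc gamma l Ll.
- by move=> l Ll u Lu ul; exact: cvg_J3 gc FXc p dens L1 gamma u l Ll Lu ul.
Qed.
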